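(* Let $(\mathcal{C},\mathcal{B},Q,2)$ be a 2-seat STV election, counted by the procedure described in the context, with reported winners $w_1\neq w_2$. Suppose the procedure FindAuditableAssertions described in the context, run on recorded ballot data and an arbitrary real-valued cost function, does not abort and returns a set $\mathcal{A}$ of assertions. If every assertion in $\mathcal{A}$ holds for the ballots $\mathcal{B}$, then $\mathcal{A}$ rules out every alternate election result: no $2$-element set $\{c_1,c_2\}\subseteq\mathcal{C}$ with $\{c_1,c_2\}\neq\{w_1,w_2\}$ is the set of seated candidates.
   Context: An STV election is a tuple $(\mathcal{C},\mathcal{B},Q,S)$ where $\mathcal{C}$ is a finite set of candidates, $\mathcal{B}$ is a multiset of ballots (each ballot is a finite sequence of distinct candidates, in order of preference, most preferred first, not necessarily containing all candidates), $S$ is the number of seats, and $Q=\lfloor |\mathcal{B}|/(S+1)\rfloor+1$ is the quota. For a sequence $\pi$, $\mathrm{first}(\pi)$ is its first element, and for a set $X$ of candidates, $\sigma_X(\pi)$ is the subsequence of $\pi$ consisting of the elements of $X$, in order. Counting: every ballot starts with value $1$ in the pile of its first-ranked candidate; a candidate's tally is the total value of the ballots in its pile; a candidate is eligible if neither eliminated nor seated. In each round every eligible candidate with tally at least $Q$ is seated (gets a quota) and every ballot in its pile is given the transfer value $(V_c-Q)/|\mathcal{B}_c|$ (unweighted Gregory method; $V_c$ is the total value, $|\mathcal{B}_c|$ the number of ballots in the pile) and moved to the next-ranked eligible candidate on the ballot (or exhausted). If no candidate reaches a quota, the eligible candidate with smallest tally is eliminated and its ballots move at their current value to their next-ranked eligible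 candidate (or are exhausted). Counting stops when all $S$ seats are filled or the number of eligible candidates equals the number of unfilled seats, in which case all remaining eligible candidates are seated. Quantities (counts with multiplicity, computed from a given ballot multiset): $L_{\mathrm{basic}}(c)=|\{\beta:\mathrm{first}(\beta)=c\}|$; $U_{\mathrm{comp}}(c,c')=|\{\beta:\mathrm{first}(\sigma_{\{c,c'\}}(\beta))=c\}|$; $L_{\mathrm{elim}}(w,O)=|\{\beta:\mathrm{first}(\sigma_{\mathcal{C}\setminus O}(\beta))=w\}|$; for $W\subseteq\mathcal{C}$, distinct $c,b\notin W$, reals $\overline{\tau}=(\overline{\tau}_v)_{v\in W}$ and $G\subseteq\mathcal{C}$, $U_{\mathrm{complex}}(c,b,W,\overline{\tau},G)=\sum_\beta u(\beta)$ with $u(\beta)$ given by the first applicable case: $0$ if some $g\in G\setminus W$ has $\mathrm{first}(\sigma_{\{g,c\}}(\beta))=g$; $0$ if $c$ does not occur in $\beta$; $0$ if $\mathrm{first}(\sigma_{\{b,c\}}(\beta))=b$; $\max\{\overline{\tau}_v:v\in W, v\text{ precedes }c\text{ in }\beta\}$ if $\mathrm{first}(\beta)\in W$; $1$ otherwise. Assertions: $\mathsf{AG}(x,y)$ means $L_{\mathrm{basic}}(x)>U_{\mathrm{comp}}(y,x)$; $\mathsf{NL}(w,l,W,\overline{\tau},G,O)$ means $L_{\mathrm{elim}}(w,O)>U_{\mathrm{complex}}(l,w,W,\overline{\tau},G)$. An assertion ''holds for $\mathcal{B}$'' if its inequality is true when the quantities are computed from $\mathcal{B}$. Procedure (quantities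 inside it are computed from the recorded ballot data, which may differ from $\mathcal{B}$): NonWinners computes $AG_{\mathrm{rec}}=\{(x,y): x\neq y,\ \mathsf{AG}(x,y)\text{ holds for the recorded data}\}$, the set $NW$ of candidates $c$ with at least two distinct $x$ such that $(x,c)\in AG_{\mathrm{rec}}$, and for each $c\in NW$ two assertions $\mathsf{AG}(x_1,c),\mathsf{AG}(x_2,c)$ with $x_1\neq x_2$ and $(x_1,c),(x_2,c)\in AG_{\mathrm{rec}}$ (chosen to minimise the cost); these form the initial $\mathcal{A}$. Then for every unordered pair $\{c_1,c_2\}$ of distinct candidates with $\{c_1,c_2\}\neq\{w_1,w_2\}$ and $\{c_1,c_2\}\cap NW=\emptyset$, the procedure considers all $o\in\mathcal{C}\setminus\{c_1,c_2\}$ and both orderings $(x,y)\in\{(c_1,c_2),(c_2,c_1)\}$, with $O_o=\{o':(o,o')\in AG_{\mathrm{rec}}\}$ and $G_y=\{g:(g,y)\in AG_{\mathrm{rec}}\}$, and keeps those for which $\mathsf{NL}(o,y,\{x\},\overline{\tau},G_y,O_o\setminus\{x\})$ with $\overline{\tau}_x=2/3$ holds for the recorded data; if there are none it aborts, otherwise it picks one such choice (of minimal cost) and adds to $\mathcal{A}$ the assertions $\mathsf{NL}(o,y,\{x\},\overline{\tau},G_y,O_o\setminus\{x\})$ (with $\overline{\tau}_x=2/3$), $\mathsf{AG}(o,o')$ for all $o'\in O_o$, and $\mathsf{AG}(g,y)$ for all $g\in G_y$. Finally it returns $\mathcal{A}$. *)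

From HB Require Import structures.
From mathcomp Require Import all_boot all_order all_algebra.
Set Implicit Arguments.
Unset Strict Implicit.
Unset Printing Implicit Defensive.
Import Order.TTheory GRing.Theory Num.Theory.
Local Open Scope ring_scope.

(* Candidates are the elements of a finite type T; a ballot is a seq T
   (most preferred first); a multiset of ballots is a seq (seq T).
   Real numbers are modelled by an arbitrary real field R. *)

Section STV.
Variables (R : realFieldType) (T : finType).

Definition sigma (X : {set T}) (pi : seq T) : seq T := [seq d <- pi | d \in X].

Definition L_basic (B : seq (seq T)) (c : T) : nat :=
  count (fun beta => ohead beta == Some c) B.

Definition U_comp (B : seq (seq T)) (c c' : T) : nat :=
  count (fun beta => ohead (sigma [set c; c'] beta) == Some c) B.

Definition L_elim (B : seq (seq T)) (w : T) (O : {set T}) : nat :=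
  count (fun beta => ohead (sigma (~: O) beta) == Some w) B.

Definition u_complex (c b : T) (W : {set T}) (tau : T -> R) (G : {set T})
  (beta : seq T) : R :=
  if [exists g in G :\: W, ohead (sigma [set g; c] beta) == Some g] then 0
  else if c \notin beta then 0
  else if ohead (sigma [set b; c] beta) == Some b then 0
  else if (if ohead beta is Some f then f \in W else false) then
    (* max { tau_v : v in W, v precedes c in beta } (nonempty here) *)
    let l := [seq tau v | v <- take (index c beta) beta & v \in W] in
    \big[Num.max/head 0 l]_(t <- l) t
  else 1.

Definition U_complex (B : seq (seq T)) (c b : T) (W : {set T}) (tau : T -> R)
  (G : {set T}) : R :=
  \sum_(beta <- B) u_complex c b W tau G beta.

Inductive assertion : Type :=
| AG of T & T
| NL of T & T & {set T} & (T -> R) & {set T} & {set T}.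

Definition holds (B : seq (seq T)) (a : assertion) : Prop :=
  match a with
  | AG x y => (U_comp B y x < L_basic B x)%N
  | NL w l W tau G Ov => U_complex B l w W tau G < (L_elim B w Ov)%:R
  end.

Section Procedure.
Variable Rec : seq (seq T).

Definition AG_rec (x y : T) : bool := (x != y) && (U_comp Rec y x < L_basic Rec x)%N.

Definition NW : {set T} := [set c | (1 < #|[set x | AG_rec x c]|)%N].

Definition validNW (c : T) (p : T * T) : Prop :=
  [/\ p.1 != p.2, AG_rec p.1 c & AG_rec p.2 c].

Definition groupNW (c : T) (p : T * T) : seq assertion := [:: AG p.1 c; AG p.2 c].

Definition O_of (o : T) : {set T} := [set o' | AG_rec o o'].
Definition G_of (y : T) : {set T} := [set g | AG_rec g y].

Definition two_thirds : R := 2%:R / 3%:R.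

Definition NL_of (t : T * T * T) : assertion :=
  let: (o, x, y) := t in NL o y [set x] (fun _ => two_thirds) (G_of y) (O_of o :\ x).

Definition cand_pairs (w1 w2 : T) : {set {set T}} :=
  [set P : {set T} | [&& #|P| == 2%N, P != [set w1; w2] & [disjoint P & NW]]].

Definition validP (P : {set T}) (t : T * T * T) : Prop :=
  let: (o, x, y) := t in
  [/\ o \notin P, x \in P, y \in P, x != y & holds Rec (NL_of t)].

Definition groupP (t : T * T * T) : seq assertion :=
  let: (o, x, y) := t in
  NL_of t :: [seq AG o o' | o' <- enum (O_of o)] ++ [seq AG g y | g <- enum (G_of y)].

(* "run on recorded data Rec with cost function cost, the procedure does not
   abort and returns A" (any minimal-cost choice may be picked) *)
Definition FindAuditableAssertions (cost : seq assertion -> R) (w1 w2 : T)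
  (A : seq assertion) : Prop :=
  exists (chNW : T -> T * T) (chP : {set T} -> T * T * T),
  [/\ (forall c, c \in NW -> validNW c (chNW c) /\
         forall p, validNW c p -> cost (groupNW c (chNW c)) <= cost (groupNW c p)),
      (forall P, P \in cand_pairs w1 w2 -> validP P (chP P) /\
         forall t, validP P t -> cost (groupP (chP P)) <= cost (groupP t))
    & A = flatten [seq groupNW c (chNW c) | c <- enum NW]
          ++ flatten [seq groupP (chP P) | P <- enum (cand_pairs w1 w2)]].

End Procedure.

(* ---------------- STV counting (unweighted Gregory) ---------------- *)

Record ballot_state : Type := BSt {
  b_ballot : seq T;
  b_pile : option T;     (* the candidate whose pile holds it; None = exhausted *)
  b_val : R }.

Record stv_state : Type := StvSt {
  st_seated : {set T};
  st_elim : {set T};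
  st_piles : seq ballot_state }.

Definition eligible (s : stv_state) (c : T) : bool :=
  (c \notin st_seated s) && (c \notin st_elim s).

Definition elig_set (s : stv_state) : {set T} := [set c | eligible s c].

Definition tally (s : stv_state) (c : T) : R :=
  \sum_(b <- st_piles s | b_pile b == Some c) b_val b.

Definition npile (s : stv_state) (c : T) : nat :=
  count (fun b => b_pile b == Some c) (st_piles s).

(* next-ranked candidate after c on beta satisfying el (None = exhausted) *)
Definition next_elig (el : pred T) (beta : seq T) (c : T) : option T :=
  ohead [seq d <- drop (index c beta).+1 beta | el d].

Definition quota (S : nat) (B : seq (seq T)) : nat := (size B %/ S.+1).+1.

Definition stv_init (B : seq (seq T)) : stv_state :=
  StvSt set0 set0 [seq BSt beta (ohead beta) 1 | beta <- B].

Definition reaching (Q : nat) (s : stv_state) : {set T} :=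
  [set c | eligible s c & Q%:R <= tally s c].

Definition quota_round (Q : nat) (s : stv_state) : stv_state :=
  let E := reaching Q s in
  let seated' := st_seated s :|: E in
  let el' := fun d => (d \notin seated') && (d \notin st_elim s) in
  StvSt seated' (st_elim s)
    [seq match b_pile b with
         | Some c => if c \in E then
                       BSt (b_ballot b) (next_elig el' (b_ballot b) c)
                           ((tally s c - Q%:R) / (npile s c)%:R)
                     else b
         | None => b
         end | b <- st_piles s].

Definition elim_round (s : stv_state) (c : T) : stv_state :=
  let elim' := st_elim s :|: [set c] in
  let el' := fun d => (d \notin st_seated s) && (d \notin elim') in
  StvSt (st_seated s) elim'
    [seq if b_pile b == Some c then
           BSt (b_ballot b) (next_elig el' (b_ballot b) c) (b_val b)
         else b | b <- st_piles s].

Inductive stv_step (Q : nat) : stv_state -> stv_state -> Prop :=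
| StepQuota s : reaching Q s != set0 -> stv_step Q s (quota_round Q s)
| StepElim s c : reaching Q s = set0 -> eligible s c ->
    (forall d, eligible s d -> tally s c <= tally s d) ->
    stv_step Q s (elim_round s c).

Definition terminal (S : nat) (s : stv_state) : bool :=
  (S <= #|st_seated s|)%N || (#|elig_set s| == S - #|st_seated s|)%N.

Definition final_result (S : nat) (s : stv_state) : {set T} :=
  if (S <= #|st_seated s|)%N then st_seated s else st_seated s :|: elig_set s.

Inductive stv_count (S : nat) (B : seq (seq T)) : stv_state -> {set T} -> Prop :=
| CountStop s : terminal S s -> stv_count S B s (final_result S s)
| CountStep s s' W : ~~ terminal S s -> stv_step (quota S B) s s' ->
    stv_count S B s' W -> stv_count S B s W.

(* W is a possible set of seated candidates of the S-seat STV count of B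
   (ties for elimination may be broken arbitrarily) *)
Definition stv_outcome (S : nat) (B : seq (seq T)) (W : {set T}) : Prop :=
  stv_count S B (stv_init B) W.

End STV.

From Pilot Require Import Defs.
From Stdlib Require List.
From HB Require Import structures.
From mathcomp Require Import all_boot all_order all_algebra.
From mathcomp Require Import zify ring lra.
Import Order.TTheory GRing.Theory Num.Theory.
Local Open Scope ring_scope.

Set Implicit Arguments.
Unset Strict Implicit.

(** Along any run of the count every ballot lies in the pile of its first eligible
   preference with a value in [0, 1]; the value is still 1 unless a seated candidate
   precedes that pile, and it is at most 2/3 once the first preference is seated
   (surplus transfer values stay below 2/3 because |B| < 3Q); and the value left in
   the piles plus Q per seated candidate never exceeds |B|.

   By this invariant AG(x, y) keeps the tally of y below that of x while both are
   eligible, so a candidate beaten in this way by two others can only be seated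
   together with both of them, which needs three seats.  For a pair {x, y} guarded
   by NL(o, y, {x}, 2/3, G_y, O_o \ {x}), the candidate o is never seated (the seats
   go to x and y) and never excluded: once the candidates of O_o \ {x} are gone its
   tally is at least L_elim, whereas y has tally at most U_complex < L_elim while
   eligible and needs Q <= U_complex to be seated.  So x and y end up seated with o
   still standing, and then the two quotas and the L_elim ballots still at full
   value add up to more than |B|. *)

(** * First elements of filtered sequences *)

Section FirstInFilter.
Variable T : eqType.
Implicit Types (a b : pred T) (s : seq T).

Lemma ohead_filter_someP a s c :
  ohead [seq x <- s | a x] = Some c <->
  [/\ c \in s, a c & forall d, d \in take (index c s) s -> ~~ a d].
Proof.
elim: s => [|z s IH] /=; first by split=> // -[].
have [->|nzc] := eqVneq z c.
  rewrite mem_head /=; case ac: (a c) => /=; first by split=> // _; split.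
  by split=> [/IH [_]|[]] //; rewrite ac.
rewrite in_cons eq_sym (negbTE nzc) /=; case az: (a z) => /=.
  split=> [[zc]|[_ _ /(_ z)]]; first by rewrite zc eqxx in nzc.
  by rewrite mem_head az => /(_ isT).
rewrite IH; split=> -[cs ac before]; split=> // d.
  by rewrite in_cons => /orP [/eqP ->|]; [rewrite az | exact: before].
by move=> ds; apply: before; rewrite in_cons ds orbT.
Qed.

Lemma ohead_filter_noneP a s :
  ohead [seq x <- s | a x] = None <-> (forall d, d \in s -> ~~ a d).
Proof.
elim: s => [|z s IH] //=; case az: (a z) => /=.
  by split=> // /(_ z (mem_head _ _)); rewrite az.
rewrite IH; split=> h d; last by move=> ds; apply: h; rewrite in_cons ds orbT.
by rewrite in_cons => /orP [/eqP ->|]; [rewrite az | exact: h].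
Qed.

Lemma ohead_filter_index a s c d :
  ohead [seq x <- s | a x] = Some c -> d \in s -> a d -> (index c s <= index d s)%N.
Proof.
case/ohead_filter_someP => _ _ before ds ad; rewrite leqNgt; apply/negP => lt_dc.
by move: (before d); rewrite in_take // lt_dc ad => /(_ isT).
Qed.

Lemma ohead_filter_sub a b s c :
  ohead [seq x <- s | a x] = Some c -> (forall d, b d -> a d) -> b c ->
  ohead [seq x <- s | b x] = Some c.
Proof.
case/ohead_filter_someP => cs _ before sub bc; apply/ohead_filter_someP.
by split=> // d /before; apply: contra => /sub.
Qed.

Lemma ohead_filter_sub_none a b s :
  ohead [seq x <- s | a x] = None -> (forall d, b d -> a d) ->
  ohead [seq x <- s | b x] = None.
Proof.
move/ohead_filter_noneP=> none sub; apply/ohead_filter_noneP => d /none.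
by apply: contra => /sub.
Qed.

Lemma ohead_filter_skip a b s c :
  ohead [seq x <- s | a x] = Some c -> (forall d, b d -> a d) -> ~~ b c ->
  ohead [seq x <- s | b x] = ohead [seq x <- drop (index c s).+1 s | b x].
Proof.
case/ohead_filter_someP => cs _ before sub bc.
rewrite -{1}(cat_take_drop (index c s) s) (drop_nth c) ?index_mem //.
rewrite nth_index // filter_cat /= (negbTE bc).
suff -> : [seq x <- take (index c s) s | b x] = [::] by [].
apply/eqP; rewrite -[_ == _]negbK -has_filter -all_predC.
by apply/allP => d /before /=; apply: contra => /sub.
Qed.

Lemma ohead_filter_skip_index a b s c p :
  ohead [seq x <- s | a x] = Some c -> (forall d, b d -> a d) -> ~~ b c ->
  ohead [seq x <- s | b x] = Some p -> (index c s < index p s)%N.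
Proof.
move=> ac sub bc /ohead_filter_someP [ps bp _].
have [cs _ _] := (ohead_filter_someP a s c).1 ac.
rewrite ltn_neqAle (ohead_filter_index ac ps (sub p bp)) andbT.
by apply: contraNneq bc => /(index_inj c cs ps) ->.
Qed.

End FirstInFilter.

Section SumsOverIn.
Variables (R : numDomainType) (X : Type).
Implicit Types (l : seq X) (F G : X -> R).

Lemma ler_sum_In l F G :
  (forall x, List.In x l -> F x <= G x) -> \sum_(x <- l) F x <= \sum_(x <- l) G x.
Proof.
elim: l => [|x l IH] FG; first by rewrite !big_nil.
by rewrite !big_cons lerD ?FG //=; [left | apply: IH => y ly; apply: FG; right].
Qed.

Lemma sumr_ge0_In l F : (forall x, List.In x l -> 0 <= F x) -> 0 <= \sum_(x <- l) F x.
Proof. by move=> F0; apply: le_trans (ler_sum_In (F := fun=> 0) F0); rewrite big1. Qed.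

Lemma sumr_nat_count l (P : pred X) : \sum_(x <- l) ((P x)%:R : R) = (count P l)%:R.
Proof.
by rewrite -sum1_count natr_sum [RHS]big_mkcond; apply: eq_bigr => x _; case: (P x).
Qed.

End SumsOverIn.

Lemma In_mem (X : eqType) (s : seq X) x : x \in s -> List.In x s.
Proof. by elim: s => [|y s IH] //=; rewrite in_cons => /orP [/eqP ->|/IH]; [left | right]. Qed.

Lemma In_flatten_map (X : eqType) (Y : Type) (f : X -> seq Y) s x a :
  x \in s -> List.In a (f x) -> List.In a (flatten (map f s)).
Proof.
elim: s => [|y s IH] //=; rewrite in_cons => /orP [/eqP <-|xs] fa; apply/List.in_or_app.
  by left.
by right; apply: IH.
Qed.

Section Rounds.
Variables (R : realFieldType) (T : finType).
Implicit Types (s : stv_state R T) (q S : nat).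

Lemma eligible_quota_round q s d :
  eligible (quota_round q s) d = eligible s d && (d \notin reaching q s).
Proof.
rewrite /eligible /= in_setU negb_or /reaching inE /eligible.
by case: (d \in st_seated s); case: (d \in st_elim s); case: (_ <= _).
Qed.

Lemma eligible_elim_round s c d :
  eligible (elim_round s c) d = eligible s d && (d != c).
Proof.
rewrite /eligible /= in_setU in_set1 negb_or.
by case: (d \in st_seated s); case: (d \in st_elim s); case: (d == c).
Qed.

Lemma step_eligible q s s' d : stv_step q s s' -> eligible s' d -> eligible s d.
Proof.
case=> [s0 _|s0 c _ _ _];
  [rewrite eligible_quota_round | rewrite eligible_elim_round]; by case/andP.
Qed.

Lemma step_seated q s s' d : stv_step q s s' -> d \in st_seated s -> d \in st_seated s'.
Proof. by case=> [s0 _|s0 c _ _ _] //= dS; rewrite in_setU dS. Qed.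

Lemma step_elim q s s' d : stv_step q s s' -> d \in st_elim s -> d \in st_elim s'.
Proof. by case=> [s0 _|s0 c _ _ _] //= dE; rewrite in_setU dE. Qed.

Lemma seated_in_outcome S B s W d : stv_count S B s W -> d \in st_seated s -> d \in W.
Proof.
elim=> {s W} [s _|s s' W _ st _ IH] dS; last exact: IH (step_seated st dS).
by rewrite /final_result; case: ifP => // _; rewrite in_setU dS.
Qed.

End Rounds.

(** * The counting invariant *)

Section Invariant.
Variables (R : realFieldType) (T : finType) (B : seq (seq T)).
Local Notation Q := (quota 2 B).
Local Notation state := (stv_state R T).
Local Notation tally := (@Defs.tally R T).
Local Notation tau := (two_thirds R).
Implicit Types (s : state) (b : ballot_state R T).

Definition live_value b : R := if b_pile b is Some _ then b_val b else 0.
Definition live_total s : R := \sum_(b <- st_piles s) live_value b.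

Record invariant s : Prop := Invariant {
  inv_ballots : map (@b_ballot R T) (st_piles s) = B;
  inv_pile : forall b, List.In b (st_piles s) ->
    b_pile b = ohead [seq d <- b_ballot b | eligible s d];
  inv_value : forall b, List.In b (st_piles s) -> 0 <= b_val b <= 1;
  inv_value_seated_first : forall b h, List.In b (st_piles s) ->
    ohead (b_ballot b) = Some h -> h \in st_seated s -> b_val b <= tau;
  inv_value_full : forall b p, List.In b (st_piles s) -> b_pile b = Some p ->
    b_val b = 1 \/
    has (fun d => d \in st_seated s) (take (index p (b_ballot b)) (b_ballot b));
  inv_seated_elim : forall d, d \in st_seated s -> d \notin st_elim s;
  inv_budget : live_total s + (Q * #|st_seated s|)%N%:R <= (size B)%:R }.

Lemma size_lt_3quota : (size B < 3 * Q)%N.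
Proof. rewrite /quota; lia. Qed.

Lemma two_thirds_ge0 : 0 <= tau.
Proof. by rewrite divr_ge0 ?ler0n. Qed.

Lemma two_thirds_le1 : tau <= 1.
Proof. by rewrite ler_pdivrMr ?ltr0n // mul1r ler_nat. Qed.

Lemma reachingP s c : c \in reaching Q s = eligible s c && (Q%:R <= tally s c).
Proof. by rewrite inE. Qed.

Lemma invariant_init : invariant (stv_init R B).
Proof.
have all_elig d : eligible (stv_init R B) d by rewrite /eligible /= !inE.
split=> //=.
- by rewrite -map_comp map_id.
- move=> b /List.in_map_iff [beta [<- _]] /=.
  by rewrite (all_filterP _) //; apply/allP => d _.
- by move=> b /List.in_map_iff [beta [<- _]] /=; rewrite ler01 lexx.
- by move=> b h _ _; rewrite inE.
- by move=> b p /List.in_map_iff [beta [<- _]]; left.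
- by move=> d; rewrite inE.
- rewrite cards0 muln0 addr0 /live_total big_map -(count_predT B).
  rewrite -(sumr_nat_count R B predT); apply: ler_sum_In => beta _.
  by rewrite /live_value /=; case: (ohead beta).
Qed.

Section InvariantFacts.
Variable s : state.
Hypothesis I : invariant s.

Lemma tally_mkcond c :
  tally s c = \sum_(b <- st_piles s) (if b_pile b == Some c then b_val b else 0).
Proof. by rewrite /Defs.tally big_mkcond. Qed.

Lemma count_piles (P : pred (seq T)) :
  count P B = count (fun b => P (b_ballot b)) (st_piles s).
Proof. by rewrite -(inv_ballots I) count_map. Qed.

Lemma tally_le_npile c : tally s c <= (npile s c)%:R.
Proof.
rewrite tally_mkcond /npile -sumr_nat_count; apply: ler_sum_In => b sb.
by case: (_ == _) => //; case/andP: (inv_value I sb).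
Qed.

Lemma npile_le_size c : (npile s c <= size B)%N.
Proof. by rewrite -(inv_ballots I) size_map /npile count_size. Qed.

Lemma live_total_ge0 : 0 <= live_total s.
Proof.
apply: sumr_ge0_In => b sb; rewrite /live_value.
by case: (b_pile b) => //; case/andP: (inv_value I sb).
Qed.

Lemma card_seated_le2 : (#|st_seated s| <= 2)%N.
Proof.
have : ((Q * #|st_seated s|)%N%:R <= (size B)%:R :> R).
  by apply: le_trans (inv_budget I); rewrite lerDr live_total_ge0.
rewrite ler_nat => budget; have := size_lt_3quota; nia.
Qed.

Lemma pile_first b p : List.In b (st_piles s) -> b_pile b = Some p ->
  [/\ p \in b_ballot b, eligible s p &
      forall d, d \in take (index p (b_ballot b)) (b_ballot b) -> ~~ eligible s d].
Proof. by move=> sb pb; apply/ohead_filter_someP; rewrite -(inv_pile I sb). Qed.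

Lemma pile_first_in b p (X : {set T}) : List.In b (st_piles s) -> b_pile b = Some p ->
  p \in X -> {subset X <= eligible s} -> ohead (sigma X (b_ballot b)) = Some p.
Proof.
move=> sb pb pX Xe; apply: (@ohead_filter_sub _ (eligible s)) pX => //.
by rewrite -(inv_pile I sb).
Qed.

Lemma pile_first_pref b h : List.In b (st_piles s) ->
  ohead (b_ballot b) = Some h -> eligible s h -> b_pile b = Some h /\ b_val b = 1.
Proof.
move=> sb bh eh; have pb : b_pile b = Some h.
  by rewrite (inv_pile I sb); move: bh; case: (b_ballot b) => [|z beta] //= [->]; rewrite eh.
split=> //; case: (inv_value_full I sb pb) => // seated_before.
by move: seated_before bh; case: (b_ballot b) => [|z beta] //= + [zh]; rewrite zh eqxx.
Qed.

Definition transfer_value c : R := (tally s c - Q%:R) / (npile s c)%:R.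

Lemma npile_reaching_gt0 c : c \in reaching Q s -> (0 < npile s c)%N.
Proof.
rewrite reachingP => /andP [_ Qc].
rewrite -(ltr_nat R); apply: lt_le_trans (tally_le_npile c).
by apply: lt_le_trans Qc; rewrite ltr0n.
Qed.

(* With [n] ballots of total value [V <= n] in the pile, [(V - Q) / n <= 1 - Q / n],
   and [n <= |B| < 3 Q] makes this at most [2/3]. *)
Lemma transfer_value_bounds c : c \in reaching Q s ->
  0 <= transfer_value c <= tau.
Proof.
move=> cE; have n_gt0 : (0 : R) < (npile s c)%:R by rewrite ltr0n npile_reaching_gt0.
move: (cE); rewrite reachingP => /andP [_ Qc].
have V_le_n := tally_le_npile c.
have n_le_3Q : (npile s c)%:R <= 3%:R * (Q%:R : R).
  by rewrite -natrM ler_nat (leq_trans (npile_le_size c)) // ltnW // size_lt_3quota.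
rewrite /transfer_value divr_ge0 ?subr_ge0 ?(ltW n_gt0) //= ler_pdivrMr // /two_thirds; lra.
Qed.

Lemma quota_round_piles b : List.In b (st_piles (quota_round Q s)) ->
  exists b0, List.In b0 (st_piles s) /\
   ((exists c, [/\ b_pile b0 = Some c, c \in reaching Q s &
       b = BSt (b_ballot b0) (next_elig (eligible (quota_round Q s)) (b_ballot b0) c)
               (transfer_value c)])
    \/ ((forall c, b_pile b0 = Some c -> c \notin reaching Q s) /\ b = b0)).
Proof.
move=> /List.in_map_iff [b0 [<- sb0]]; exists b0; split=> //.
case pb0: (b_pile b0) => [c|]; last by right.
by case cE: (c \in reaching Q s); [left; exists c | right; split=> // _ [<-]; rewrite cE].
Qed.

Lemma elim_round_piles c b : List.In b (st_piles (elim_round s c)) ->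
  exists b0, List.In b0 (st_piles s) /\
   ((b_pile b0 = Some c /\
       b = BSt (b_ballot b0) (next_elig (eligible (elim_round s c)) (b_ballot b0) c) (b_val b0))
    \/ (b_pile b0 <> Some c /\ b = b0)).
Proof.
move=> /List.in_map_iff [b0 [<- sb0]]; exists b0; split=> //.
by case: (eqVneq (b_pile b0) (Some c)) => pb0; [left | right; split=> //; apply/eqP].
Qed.

(* Written as a sum over the elected candidates so that [exchange_big] turns the
   total deduction into one quota per elected candidate. *)
Definition quota_deduction b : R :=
  \sum_(c in reaching Q s)
     (if b_pile b == Some c then b_val b - transfer_value c else 0).

Lemma quota_deductionE b : quota_deduction b =
  if b_pile b is Some c then
    (if c \in reaching Q s then b_val b - transfer_value c else 0)
  else 0.
Proof.
rewrite /quota_deduction; case: (b_pile b) => [c|]; last by rewrite big1.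
case: ifP => cE; last by rewrite big1 // => d dE; case: eqP => // -[cd]; rewrite cd dE in cE.
rewrite (bigD1 c) //= eqxx big1 ?addr0 // => d /andP [_ dc].
by case: eqP => // -[cd]; rewrite cd eqxx in dc.
Qed.

Lemma live_total_quota_round :
  live_total (quota_round Q s) + (Q * #|reaching Q s|)%N%:R <= live_total s.
Proof.
have per_ballot : live_total (quota_round Q s) <=
    \sum_(b <- st_piles s) (live_value b - quota_deduction b).
  rewrite /live_total /= big_map; apply: ler_sum_In => b sb.
  rewrite quota_deductionE /live_value; case pb: (b_pile b) => [c|]; last by rewrite /= pb subr0.
  case: ifP => cE /=; last by rewrite pb subr0.
  have /andP [tv_ge0 _] := transfer_value_bounds cE.
  by rewrite opprB addrCA subrr addr0; case: (next_elig _ _ _).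
have deducted : \sum_(b <- st_piles s) quota_deduction b = (Q * #|reaching Q s|)%N%:R.
  rewrite /quota_deduction exchange_big /= natrM mulr_natr -sumr_const.
  apply: eq_bigr => c cE; rewrite -big_mkcond sumrB -/(Defs.tally s c).
  rewrite big_const_seq iter_addr_0 -/(npile s c) -[_ *+ npile s c]mulr_natr.
  by rewrite divfK ?pnatr_eq0 -?lt0n ?npile_reaching_gt0 // opprB addrC subrK.
rewrite sumrB deducted -/(live_total s) in per_ballot; lra.
Qed.

Section Transfer.
Variables (el : pred T) (b : ballot_state R T).
Hypotheses (sb : List.In b (st_piles s)) (el_elig : forall d, el d -> eligible s d).

Lemma next_elig_first c : b_pile b = Some c -> ~~ el c ->
  next_elig el (b_ballot b) c = ohead [seq d <- b_ballot b | el d].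
Proof.
move=> pb elc; rewrite /next_elig; symmetry; apply: ohead_filter_skip el_elig elc.
by rewrite -(inv_pile I sb).
Qed.

Lemma next_elig_index c p : b_pile b = Some c -> ~~ el c ->
  next_elig el (b_ballot b) c = Some p -> (index c (b_ballot b) < index p (b_ballot b))%N.
Proof.
move=> pb elc; rewrite next_elig_first // => next_p.
by apply: ohead_filter_skip_index el_elig elc next_p; rewrite -(inv_pile I sb).
Qed.

Lemma pile_unmoved : (forall c, b_pile b = Some c -> el c) ->
  b_pile b = ohead [seq d <- b_ballot b | el d].
Proof.
move=> el_pile; have := inv_pile I sb; case pb: (b_pile b) => [c|] first_elig.
  by symmetry; apply: ohead_filter_sub el_elig (el_pile c pb).
by symmetry; apply: ohead_filter_sub_none el_elig.
Qed.

End Transfer.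

Lemma invariant_quota_round : invariant (quota_round Q s).
Proof.
have sub d : eligible (quota_round Q s) d -> eligible s d.
  by rewrite eligible_quota_round => /andP [].
have notE c : c \in reaching Q s -> ~~ eligible (quota_round Q s) c.
  by move=> cE; rewrite eligible_quota_round cE andbF.
split.
- rewrite /= -map_comp; apply: etrans (inv_ballots I); apply: eq_map => b0 /=.
  by case: (b_pile b0) => // c; case: (c \in reaching Q s).
- move=> b /quota_round_piles [b0 [sb0 [[c [pb0 cE ->]]|[unmoved ->]]]] /=.
    exact: (next_elig_first sb0 sub pb0 (notE c cE)).
  apply: (pile_unmoved sb0 sub) => c pb0; rewrite eligible_quota_round unmoved //.
  by case: (pile_first sb0 pb0) => _ ->.
- move=> b /quota_round_piles [b0 [sb0 [[c [pb0 cE ->]]|[_ ->]]]] /=.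
    by have /andP [-> /le_trans ->] := transfer_value_bounds cE; rewrite ?two_thirds_le1.
  exact: (inv_value I sb0).
- move=> b h /quota_round_piles [b0 [sb0 [[c [pb0 cE ->]]|[unmoved ->]]]] /=.
    by move=> _ _; case/andP: (transfer_value_bounds cE).
  move=> b0h; rewrite in_setU => /orP [hS|hE]; first exact: (inv_value_seated_first I sb0 b0h hS).
  have /andP [eh _] : eligible s h && (Q%:R <= tally s h) by rewrite -reachingP.
  have [pb0 _] := pile_first_pref sb0 b0h eh.
  by move: (unmoved h pb0); rewrite hE.
- move=> b p /quota_round_piles [b0 [sb0 [[c [pb0 cE ->]]|[_ ->]]]] /= pb.
    right; apply/hasP; exists c; last by rewrite in_setU cE orbT.
    have [cb _ _] := pile_first sb0 pb0.
    by rewrite in_take //; exact: (next_elig_index sb0 sub pb0 (notE c cE) pb).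
  case: (inv_value_full I sb0 pb) => [->|seated_before]; [by left | right].
  by apply: sub_has seated_before => d; rewrite in_setU => ->.
- move=> d; rewrite /= in_setU => /orP [/(inv_seated_elim I) //|].
  by rewrite reachingP => /andP [/andP [_ ->]].
- have disj : st_seated s :&: reaching Q s = set0.
    apply/setP => d; rewrite !inE; apply/negP => /andP [dS /andP [/andP [dnS _] _]].
    by rewrite dS in dnS.
  rewrite /= cardsU disj cards0 subn0 mulnDr natrD.
  have := live_total_quota_round; have := inv_budget I; lra.
Qed.

Lemma invariant_elim_round c : eligible s c -> invariant (elim_round s c).
Proof.
move=> ec.
have sub d : eligible (elim_round s c) d -> eligible s d.
  by rewrite eligible_elim_round => /andP [].
have notc : ~~ eligible (elim_round s c) c by rewrite eligible_elim_round eqxx andbF.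
split.
- rewrite /= -map_comp; apply: etrans (inv_ballots I); apply: eq_map => b0 /=.
  by case: (b_pile b0 == Some c).
- move=> b /elim_round_piles [b0 [sb0 [[pb0 ->]|[pb0 ->]]]] /=.
    exact: (next_elig_first sb0 sub pb0 notc).
  apply: (pile_unmoved sb0 sub) => d pd; rewrite eligible_elim_round.
  have [_ -> _] := pile_first sb0 pd; by apply/eqP => dc; apply: pb0; rewrite pd dc.
- by move=> b /elim_round_piles [b0 [sb0 [[_ ->]|[_ ->]]]]; exact: (inv_value I sb0).
- move=> b h /elim_round_piles [b0 [sb0 [[_ ->]|[_ ->]]]];
    exact: (inv_value_seated_first I sb0).
- move=> b p /elim_round_piles [b0 [sb0 [[pb0 ->]|[_ ->]]]] /= pb;
    last exact: (inv_value_full I sb0 pb).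
  case: (inv_value_full I sb0 pb0) => [->|seated_before]; [by left | right].
  have le_cp := ltnW (next_elig_index sb0 sub pb0 notc pb).
  move: seated_before; rewrite -(take_takel _ le_cp) => /hasP [d /mem_take dp dS].
  by apply/hasP; exists d.
- move=> d dS; rewrite /= in_setU in_set1 negb_or (inv_seated_elim I dS) /=.
  by apply: contraTneq ec => <-; rewrite /eligible dS.
- apply: le_trans (inv_budget I); rewrite lerD2r /live_total /= big_map.
  apply: ler_sum_In => b0 sb0; rewrite /live_value.
  case: eqP => [pb0|//] /=; rewrite pb0.
  by case: (next_elig _ _ _) => //; case/andP: (inv_value I sb0).
Qed.

End InvariantFacts.

Lemma invariant_step s s' : stv_step Q s s' -> invariant s -> invariant s'.
Proof.
by case=> [s0 _|s0 c _ ec _] I; [exact: invariant_quota_round | exact: invariant_elim_round].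
Qed.

End Invariant.

(** * What the assertions guarantee *)

Section Assertions.
Variables (R : realFieldType) (T : finType) (B : seq (seq T)).
Local Notation Q := (quota 2 B).
Local Notation state := (stv_state R T).
Local Notation tally := (@Defs.tally R T).
Local Notation tau := (two_thirds R).
Implicit Types (s : state).

Lemma elim_notin_outcome s W d :
  invariant B s -> stv_count 2 B s W -> d \in st_elim s -> d \notin W.
Proof.
move=> I count; elim: count I => {s W} [s _|s s' W _ st _ IH] I dE.
  have dnS : d \notin st_seated s by apply: contraL dE => /(inv_seated_elim I).
  rewrite /final_result; case: ifP => // _.
  by rewrite in_setU negb_or dnS inE /eligible dE andbF.
exact: IH (invariant_step st I) (step_elim st dE).
Qed.

Lemma AG_tally_lt s x y : invariant B s -> holds B (AG R x y) ->
  eligible s x -> eligible s y -> tally s y < tally s x.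
Proof.
move=> I /= AGxy ex ey.
have tally_y : tally s y <= (U_comp B y x)%:R.
  rewrite /U_comp (count_piles I) -sumr_nat_count tally_mkcond; apply: ler_sum_In => b sb.
  case: eqP => [pb|_]; last by rewrite ler0n.
  have Xe : {subset [set y; x] <= eligible s} by move=> d /set2P [->|->].
  rewrite (pile_first_in I sb pb (set21 y x) Xe) eqxx.
  by case/andP: (inv_value I sb).
have basic_x : ((L_basic B x)%:R : R) <= tally s x.
  rewrite /L_basic (count_piles I) -sumr_nat_count tally_mkcond; apply: ler_sum_In => b sb.
  case: eqP => [bx|_]; last by case: (_ == _) => //; case/andP: (inv_value I sb).
  by have [-> ->] := pile_first_pref I sb bx ex; rewrite eqxx.
by apply: le_lt_trans tally_y (lt_le_trans _ basic_x); rewrite ltr_nat.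
Qed.

Lemma AG_neq_least s x y d : invariant B s -> holds B (AG R x y) -> eligible s y ->
  (forall e, eligible s e -> tally s d <= tally s e) -> eligible s d -> x != d.
Proof.
move=> I AGxy ey least ed; apply/eqP => xd; move: AGxy; rewrite xd => AGdy.
by have := AG_tally_lt I AGdy ed ey; rewrite ltNge least.
Qed.

Lemma AG_reaching s x y : invariant B s -> holds B (AG R x y) ->
  x \notin st_elim s -> y \in reaching Q s -> x \in st_seated s :|: reaching Q s.
Proof.
move=> I AGxy xE; rewrite reachingP in_setU => /andP [ey Qy].
case xS: (x \in st_seated s) => //=; have ex : eligible s x by rewrite /eligible xS.
by rewrite reachingP ex (le_trans Qy) // ltW // AG_tally_lt.
Qed.

Lemma L_elim_ballot s o (O : {set T}) b : invariant B s -> List.In b (st_piles s) ->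
  eligible s o -> {in O, forall d, d \notin st_seated s} ->
  ohead (sigma (~: O) (b_ballot b)) = Some o ->
  exists2 p, b_pile b = Some p /\ b_val b = 1 &
    ({in O, forall d, ~~ eligible s d} -> p = o).
Proof.
move=> I sb eo O_unseated first_o.
have [ob _ before_o] := (ohead_filter_someP _ _ _).1 first_o.
case pb: (b_pile b) => [p|]; last first.
  by move: pb; rewrite (inv_pile I sb) => /ohead_filter_noneP /(_ o ob); rewrite eo.
have first_p : ohead [seq d <- b_ballot b | eligible s d] = Some p.
  by rewrite -(inv_pile I sb).
exists p; first split=> //.
  case: (inv_value_full I sb pb) => // /hasP [d dp dS].
  move: dp; rewrite -(take_takel _ (ohead_filter_index first_p ob eo)).
  by move=> /mem_take /before_o; rewrite inE negbK => /O_unseated; rewrite dS.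
move=> O_inelig; suff : ohead [seq d <- b_ballot b | eligible s d] = Some o.
  by rewrite first_p; case.
apply: (ohead_filter_sub first_o) eo => d ed; rewrite inE.
by apply: contraTN ed => /O_inelig.
Qed.

Lemma L_elim_le_tally s o (O : {set T}) : invariant B s -> eligible s o ->
  {in O, forall d, d \notin st_seated s} -> {in O, forall d, ~~ eligible s d} ->
  ((L_elim B o O)%:R : R) <= tally s o.
Proof.
move=> I eo O_unseated O_inelig.
rewrite /L_elim (count_piles I) -sumr_nat_count tally_mkcond; apply: ler_sum_In => b sb.
case: eqP => [first_o|_]; last by case: (_ == _) => //; case/andP: (inv_value I sb).
have [p [pb ->] po] := L_elim_ballot I sb eo O_unseated first_o.
by rewrite pb (po O_inelig) eqxx.
Qed.

Lemma L_elim_le_live_total s o (O : {set T}) : invariant B s -> eligible s o ->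
  {in O, forall d, d \notin st_seated s} -> ((L_elim B o O)%:R : R) <= live_total s.
Proof.
move=> I eo O_unseated.
rewrite /L_elim (count_piles I) -sumr_nat_count; apply: ler_sum_In => b sb.
rewrite /live_value; case: eqP => [first_o|_].
  by have [p [-> ->] _] := L_elim_ballot I sb eo O_unseated first_o.
by case: (b_pile b) => //; case/andP: (inv_value I sb).
Qed.

Lemma ler_seed_bigmax (h : R) (l : seq R) : h <= \big[Num.max/h]_(t <- l) t.
Proof. by elim: l => [|t l IH]; rewrite ?big_nil // big_cons le_max IH orbT. Qed.

Lemma u_complex_ge0 c b (W G : {set T}) beta :
  0 <= u_complex c b W (fun _ => tau) G beta.
Proof.
rewrite /u_complex; do !case: ifP => //; move=> *; apply: le_trans (ler_seed_bigmax _ _).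
by case: [seq _ <- _ | _] => //= *; exact: two_thirds_ge0.
Qed.

Lemma tally_le_U_complex s x y o (G : {set T}) : invariant B s ->
  eligible s y -> eligible s o -> o != y -> y \notin G -> x != y -> x \notin st_elim s ->
  {in G, forall g, g != x -> eligible s g} ->
  tally s y <= U_complex B y o [set x] (fun _ => tau) G.
Proof.
move=> I ey eo oy yG xy xE G_elig.
rewrite /U_complex -(inv_ballots I) big_map tally_mkcond; apply: ler_sum_In => b sb.
case: eqP => [pb|_]; last exact: u_complex_ge0.
have first_y (X : {set T}) : y \in X -> {subset X <= eligible s} ->
    ohead (sigma X (b_ballot b)) = Some y.
  exact: (pile_first_in I sb pb).
have [yb _ before_y] := pile_first I sb pb.
have /andP [_ v_le1] := inv_value I sb.
rewrite /u_complex; case: existsP => [[g /andP [gGx /eqP first_g]]|_].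
  move: gGx; rewrite !inE => /andP [gx gG].
  have gy : g != y by apply: contraNneq yG => <-.
  suff : ohead (sigma [set g; y] (b_ballot b)) = Some y.
    by rewrite first_g => -[/eqP]; rewrite (negbTE gy).
  by apply: first_y; [rewrite set22 | move=> d /set2P [->|->] //; exact: G_elig].
rewrite yb (first_y [set o; y]) ?set22 //=; last by move=> d /set2P [->|->].
have -> : (Some y == Some o) = false by apply/eqP => -[yo]; rewrite yo eqxx in oy.
case bx: (ohead (b_ballot b)) => [h|//]; case: ifP => [/set1P hx|//]; move: hx bx => -> bx.
have x_before_y : x \in take (index y (b_ballot b)) (b_ballot b).
  by move: bx; case: (b_ballot b) => [|z beta] //= [->]; rewrite (negbTE xy) /= mem_head.
have xS : x \in st_seated s.
  by move: (before_y x x_before_y); rewrite /eligible negb_and negbK (negbTE xE) orbF.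
apply: le_trans (inv_value_seated_first I sb bx xS) (le_trans _ (ler_seed_bigmax _ _)).
by move: bx; case: (b_ballot b) => [|z beta] //= [->]; rewrite (negbTE xy) /= inE eqxx.
Qed.

Section BeatenTwice.
Variables (c x1 x2 : T).
Hypotheses (x12 : x1 != x2) (x1c : x1 != c) (x2c : x2 != c)
  (AG1 : holds B (AG R x1 c)) (AG2 : holds B (AG R x2 c)).

Lemma beaten_twice_card (A : {set T}) : x1 \in A -> x2 \in A -> c \in A -> (2 < #|A|)%N.
Proof.
by move=> x1A x2A cA; apply/card_gt2P; exists x1, x2, c; do 2 split=> //; rewrite eq_sym.
Qed.

Lemma beaten_twice_step s s' : stv_step Q s s' -> invariant B s -> eligible s c ->
  x1 \notin st_elim s -> x2 \notin st_elim s ->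
  [/\ c \notin st_seated s', x1 \notin st_elim s' & x2 \notin st_elim s'].
Proof.
case=> [s0 _|s0 d _ ed least] I ec x1E x2E /=; last first.
  rewrite !in_setU !in_set1 !negb_or x1E x2E (AG_neq_least I AG1) //.
  by rewrite (AG_neq_least I AG2) //; case/andP: ec.
split=> //; rewrite in_setU negb_or; have [-> _] := andP ec; apply/negP => cE.
have := card_seated_le2 (invariant_quota_round I); rewrite /= leqNgt => /negP; apply.
apply: beaten_twice_card; last by rewrite in_setU cE orbT.
  exact: (AG_reaching I AG1 x1E cE).
exact: (AG_reaching I AG2 x2E cE).
Qed.

Lemma beaten_twice_notin_outcome s W : invariant B s -> stv_count 2 B s W ->
  c \notin st_seated s -> x1 \notin st_elim s -> x2 \notin st_elim s -> c \notin W.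
Proof.
move=> I count; elim: count I => {s W} [s stop|s s' W _ st count' IH] I cS x1E x2E.
  rewrite /final_result; case: ifP => [//|seats_left].
  move: stop; rewrite /terminal seats_left /= => /eqP card_elig.
  have in_final d : d \notin st_elim s -> d \in st_seated s :|: elig_set s.
    by move=> dE; rewrite in_setU inE /eligible dE andbT orbN.
  apply/negP => cW.
  have := beaten_twice_card (in_final _ x1E) (in_final _ x2E) cW.
  have := (leq_card_setU (st_seated s) (elig_set s)).1; rewrite card_elig; lia.
have I' := invariant_step st I.
apply/negP => cW; have ec : eligible s c.
  rewrite /eligible cS /=; apply: contraL cW => cE.
  exact: (elim_notin_outcome I' count' (step_elim st cE)).
have [cS' x1E' x2E'] := beaten_twice_step st I ec x1E x2E.
by move: cW; apply/negP; exact: IH.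
Qed.

End BeatenTwice.

Section NLGuardedPair.
Variables (o x y : T) (O G : {set T}).
Local Notation L := (L_elim B o (O :\ x)).
Local Notation U := (U_complex B y o [set x] (fun _ => tau) G).
Hypotheses (xy : x != y) (ox : o != x) (oy : o != y) (yG : y \notin G)
  (NL_holds : U < L%:R)
  (AG_o : {in O, forall o', holds B (AG R o o')})
  (AG_y : {in G, forall g, holds B (AG R g y)}).

Definition NL_invariant s : Prop :=
  [/\ eligible s o, {in O, forall o', o' \notin st_seated s},
      eligible s y -> {in G, forall g, g != x -> eligible s g}
    & y \in st_seated s -> Q%:R <= U].

Lemma NL_invariant_init : NL_invariant (stv_init R B).
Proof. by split=> [|o' _|_ g _ _|]; rewrite /eligible /= ?inE. Qed.

(* If [o] had the least tally, [L_elim] would bound it from below: it would then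
   beat [y] (if [y] is eligible) or reach the quota (if [y] is seated). *)
Lemma NL_least_neq s d : invariant B s -> NL_invariant s -> reaching Q s = set0 ->
  x \notin st_elim s -> y \notin st_elim s ->
  (forall e, eligible s e -> tally s d <= tally s e) -> o != d.
Proof.
move=> I [eo O_unseated G_elig Q_le_U] no_quota xE yE least.
apply/eqP => od; move: least; rewrite -od => least.
have Ox_unseated : {in O :\ x, forall d, d \notin st_seated s}.
  by move=> e; rewrite !inE => /andP [_ /O_unseated].
have Ox_inelig : {in O :\ x, forall d, ~~ eligible s d}.
  move=> e; rewrite !inE => /andP [_ eO]; apply/negP => ee.
  by have := AG_neq_least I (AG_o eO) ee least eo; rewrite eqxx.
have L_le_o := L_elim_le_tally I eo Ox_unseated Ox_inelig.
case ey: (eligible s y).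
  have := tally_le_U_complex I ey eo oy yG xy xE (G_elig ey).
  by move/le_lt_trans/(_ NL_holds)/lt_le_trans/(_ L_le_o); rewrite ltNge least.
have yS : y \in st_seated s by move: ey; rewrite /eligible yE andbT => /negbFE.
have : o \in reaching Q s.
  by rewrite reachingP eo (le_trans (Q_le_U yS)) // ltW // (lt_le_trans NL_holds).
by rewrite no_quota inE.
Qed.

Lemma NL_invariant_step s s' : stv_step Q s s' -> invariant B s -> NL_invariant s ->
  {subset st_seated s' <= [set x; y]} -> x \notin st_elim s -> y \notin st_elim s ->
  NL_invariant s'.
Proof.
move=> st I inv_s seated_xy xE yE.
have oS' : o \notin st_seated s'.
  by apply/negP => /seated_xy /set2P [] /eqP; rewrite ?(negbTE ox) ?(negbTE oy).
case: st I inv_s seated_xy oS' xE yE => [s0 no_quota|s0 d no_quota ed least]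
  I inv_s seated_xy oS' xE yE; have [eo O_unseated G_elig Q_le_U] := inv_s.
  have oR : o \notin reaching Q s0 by apply: contraNN oS' => /= oR; rewrite in_setU oR orbT.
  split.
  - by rewrite eligible_quota_round eo.
  - have /andP [oS oE] := eo.
    move=> o' o'O; rewrite /= in_setU negb_or O_unseated //=; apply: contraNN oR => o'R.
    by move: (AG_reaching I (AG_o o'O) oE o'R); rewrite in_setU (negbTE oS).
  - move=> ey' g gG gx; have ey := step_eligible (StepQuota no_quota) ey'.
    rewrite eligible_quota_round G_elig //=; apply/negP => gR.
    have /seated_xy /set2P [gx'|gy] : g \in st_seated (quota_round Q s0).
      by rewrite /= in_setU gR orbT.
    + by rewrite gx' eqxx in gx.
    + by move: yG; rewrite -gy gG.
  - rewrite /= in_setU => /orP [/Q_le_U //|yR]; move: (yR); rewrite reachingP => /andP [ey Qy].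
    exact: (le_trans Qy (tally_le_U_complex I ey eo oy yG xy xE (G_elig ey))).
have od := NL_least_neq I inv_s no_quota xE yE least.
split=> //.
- by rewrite eligible_elim_round eo.
- move=> ey' g gG gx; have ey := step_eligible (StepElim no_quota ed least) ey'.
  by rewrite eligible_elim_round G_elig //= (AG_neq_least I (AG_y gG) ey least ed).
Qed.

Lemma NL_pair_not_outcome s W : invariant B s -> stv_count 2 B s W ->
  NL_invariant s -> W != [set x; y].
Proof.
move=> I count; elim: count I => {s W} [s _|s s' W _ st count' IH] I inv_s.
  have [eo O_unseated _ Q_le_U] := inv_s; rewrite /final_result; case: ifP => [_|_].
    apply/eqP => seated_xy; have yS : y \in st_seated s by rewrite seated_xy set22.
    have Ox_unseated : {in O :\ x, forall d, d \notin st_seated s}.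
      by move=> e; rewrite !inE => /andP [_ /O_unseated].
    have := L_elim_le_live_total I eo Ox_unseated; have := inv_budget I.
    rewrite seated_xy cards2 xy /= => budget L_le_live.
    have /ltW QL : Q%:R < (L%:R : R) := le_lt_trans (Q_le_U yS) NL_holds.
    have : ((L + Q * 2)%N%:R : R) <= (size B)%:R by rewrite natrD; lra.
    rewrite ler_nat; move: QL; rewrite ler_nat; have := size_lt_3quota B; lia.
  have oW : o \in st_seated s :|: elig_set s by rewrite in_setU inE eo orbT.
  by apply: contraTneq oW => ->; rewrite !inE (negbTE ox) (negbTE oy).
apply/eqP => W_xy; have I' := invariant_step st I.
have seated_xy : {subset st_seated s' <= [set x; y]}.
  by move=> d /(seated_in_outcome count'); rewrite W_xy.
have notE d : d \in [set x; y] -> d \notin st_elim s.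
  by rewrite -W_xy => dW; apply: contraL dW => /(step_elim st) /(elim_notin_outcome I' count').
have := IH I' (NL_invariant_step st I inv_s seated_xy (notE _ (set21 _ _)) (notE _ (set22 _ _))).
by rewrite W_xy eqxx.
Qed.

End NLGuardedPair.

End Assertions.

(** * The assertions returned by the procedure *)

Section Procedure.
Variables (R : realFieldType) (T : finType) (B Rec : seq (seq T)) (w1 w2 : T)
  (cost : seq (assertion R T) -> R) (A : seq (assertion R T)).
Hypotheses (found : FindAuditableAssertions Rec cost w1 w2 A)
  (A_holds : forall a, List.In a A -> holds B a).

Lemma found_NW_assertions c : c \in NW Rec ->
  exists x1 x2, [/\ x1 != x2, x1 != c, x2 != c,
                    holds B (AG R x1 c) & holds B (AG R x2 c)].
Proof.
move=> cNW; have [chNW [chP [NW_ok _ A_def]]] := found.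
have [[x12 /andP [x1c _] /andP [x2c _]] _] := NW_ok c cNW.
have group_holds a : List.In a (groupNW R c (chNW c)) -> holds B a.
  move=> ga; apply: A_holds; rewrite A_def; apply/List.in_or_app; left.
  by apply: (In_flatten_map (x := c)) ga; rewrite mem_enum.
exists (chNW c).1, (chNW c).2; split=> //; apply: group_holds; [left | right; left] => //.
Qed.

Lemma found_pair_assertions (P : {set T}) : P \in cand_pairs Rec w1 w2 ->
  exists o x y, [/\ o \notin P, x \in P, y \in P, x != y &
    [/\ holds B (NL_of R Rec (o, x, y)),
        {in O_of Rec o, forall o', holds B (AG R o o')}
      & {in G_of Rec y, forall g, holds B (AG R g y)}]].
Proof.
move=> P_cand; have [chNW [chP [_ P_ok A_def]]] := found.
have group_holds a : List.In a (groupP R Rec (chP P)) -> holds B a.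
  move=> ga; apply: A_holds; rewrite A_def; apply/List.in_or_app; right.
  by apply: (In_flatten_map (x := P)) ga; rewrite mem_enum.
have [valid _] := P_ok P P_cand.
case: (chP P) valid group_holds => [[o x] y] [oP xP yP xy _] group_holds.
exists o, x, y; split=> //; split.
- by apply: group_holds; left.
- move=> o' o'O; apply: group_holds; right; apply/List.in_or_app; left.
  by apply: List.in_map; apply: In_mem; rewrite mem_enum.
- move=> g gG; apply: group_holds; right; apply/List.in_or_app; right.
  by apply: List.in_map; apply: In_mem; rewrite mem_enum.
Qed.

End Procedure.

Unset Implicit Arguments.
Set Strict Implicit.

Theorem theorem1 (R : realFieldType) (T : finType) (B Rec : seq (seq T))
  (w1 w2 : T) (cost : seq (assertion R T) -> R) (A : seq (assertion R T)) :
  all uniq B ->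
  w1 != w2 ->
  FindAuditableAssertions Rec cost w1 w2 A ->
  (forall a, List.In a A -> holds B a) ->
  forall W : {set T}, stv_outcome R 2 B W ->
  forall c1 c2 : T, c1 != c2 -> [set c1; c2] != [set w1; w2] ->
  W != [set c1; c2].
Proof.
(* Repeated candidates on a ballot do no harm: positions are read off with [index]. *)
move=> _ _ found A_holds W outcome c1 c2 c12 not_reported.
have I0 := invariant_init R B.
have [disj|] := boolP [disjoint [set c1; c2] & NW Rec]; last first.
  rewrite -setI_eq0 => /set0Pn [c /setIP [cP cNW]].
  have [x1 [x2 [x12 x1c x2c AG1 AG2]]] := found_NW_assertions found A_holds cNW.
  have cW : c \notin W.
    by apply: (beaten_twice_notin_outcome x12 x1c x2c AG1 AG2 I0 outcome); rewrite inE.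
  by apply: contraNneq cW => ->.
have P_cand : [set c1; c2] \in cand_pairs Rec w1 w2 by rewrite inE cards2 c12 not_reported.
have [o [x [y [oP xP yP xy [NL_ok AG_o AG_y]]]]] := found_pair_assertions found A_holds P_cand.
have ox : o != x by apply: contraNneq oP => ->.
have oy : o != y by apply: contraNneq oP => ->.
have yG : y \notin G_of Rec y by rewrite inE /AG_rec eqxx.
have xy_c12 : [set x; y] = [set c1; c2].
  apply/eqP; rewrite eqEcard !cards2 xy c12 andbT; apply/subsetP => d.
  by case/set2P => ->.
rewrite -xy_c12.
apply: (NL_pair_not_outcome xy ox oy yG NL_ok AG_o AG_y I0 outcome).
exact: NL_invariant_init.
Qed.
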